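(* Let $G=(V,E)$ be a finite, simple, connected graph with Bakry Emery curvature $K(x)\geq K>0$ at every vertex $x$, and assume $\operatorname{diam}_{\operatorname{eff}}(G)=\frac{\max_v\operatorname{Deg}(v)}{K}$. Then $G$ is a hypercube.
   Context: $d$ is the combinatorial distance, $\operatorname{Deg}$ the degree, $\operatorname{diam}_{\operatorname{eff}}(G)=\frac{1}{|V|^2}\sum_{x,y}d(x,y)$. Laplacian $\Delta f(x)=\sum_{y\sim x}(f(y)-f(x))$. Define $\Gamma_0(f,g)=fg$ and $2\Gamma_{i+1}(f,g)=\Delta\Gamma_i(f,g)-\Gamma_i(f,\Delta g)-\Gamma_i(\Delta f,g)$; write $\Gamma=\Gamma_1$, $\Gamma_i f=\Gamma_i(f,f)$. The Bakry Emery curvature at $x$ is $K(x)=\inf\{\Gamma_2 f(x): \Gamma f(x)=1\}$. Hypercube $Q_n$: binary strings of length $n$, adjacent iff differing in exactly one coordinate. *)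

From HB Require Import structures.
From mathcomp Require Import all_boot all_order all_algebra.
From mathcomp Require Import classical_sets reals ereal.
Set Implicit Arguments. Unset Strict Implicit. Unset Printing Implicit Defensive.
Import Order.TTheory GRing.Theory Num.Theory.
Local Open Scope ring_scope.
Local Open Scope classical_set_scope.

Definition simple_graph (V : finType) (adj : rel V) : Prop :=
  symmetric adj /\ irreflexive adj.

Definition connected_graph (V : finType) (adj : rel V) : Prop :=
  forall x y : V, connect adj x y.

Definition Deg (V : finType) (adj : rel V) (x : V) : nat := #|[set y | adj x y]|.
Definition maxDeg (V : finType) (adj : rel V) : nat := (\max_(v : V) Deg adj v)%N.

Definition walk_len (V : finType) (adj : rel V) (x y : V) (n : nat) : bool :=
  [exists p : n.-tuple V, path adj x p && (last x p == y)].

(* Combinatorial distance: the least n such that a walk of length n from x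
   to y exists (searched in 0..|V|-1, which suffices for connected graphs). *)
Definition dist (V : finType) (adj : rel V) (x y : V) : nat :=
  find (walk_len adj x y) (iota 0 #|V|).

Definition diam_eff (R : realType) (V : finType) (adj : rel V) : R :=
  (\sum_(x : V) \sum_(y : V) (dist adj x y)%:R) / (#|V|%:R ^+ 2).

Definition lap (R : realType) (V : finType) (adj : rel V) (f : V -> R) : V -> R :=
  fun x => \sum_(y | adj x y) (f y - f x).

Fixpoint Gam (R : realType) (V : finType) (adj : rel V) (i : nat)
  (f g : V -> R) : V -> R :=
  match i with
  | 0 => fun x => f x * g x
  | i'.+1 => fun x =>
      (lap adj (Gam adj i' f g) x - Gam adj i' f (lap adj g) x
       - Gam adj i' (lap adj f) g x) / 2
  end.

(* Bakry-Emery curvature at x: inf { Gamma_2 f (x) : Gamma f (x) = 1 },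
   as an extended real (inf of the empty set is +oo). *)
Definition BEcurv (R : realType) (V : finType) (adj : rel V) (x : V) : \bar R :=
  ereal_inf [set (Gam adj 2 f f x)%:E | f in [set f : V -> R | Gam adj 1 f f x = 1]].

Definition Qadj (n : nat) : rel {ffun 'I_n -> bool} :=
  fun u v => #|[set i | u i != v i]| == 1%N.

Definition is_hypercube (V : finType) (adj : rel V) : Prop :=
  exists n : nat, exists phi : V -> {ffun 'I_n -> bool},
    bijective phi /\ forall x y : V, adj x y = Qadj (phi x) (phi y).

(* Fix a vertex b, let m_b be the mean distance from b and solve the Poisson
   equation lap u = m_b - d(b, .). At a maximum point of Gam1 u, the curvature
   inequality K Gam1 u <= Gam2 u together with |grad d(b, .)| <= 1 gives
   2 K^2 max Gam1 u <= D, while Cauchy-Schwarz at b gives K m_b <= K^2 Gam1 u (b) + D/2.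
   Hence K m_b <= D, i.e. diam_eff <= D/K. In the equality case the maximum
   principle makes Gam1 u constant, so all these inequalities are equalities at
   every vertex: the graph is D-regular, d(b, .) changes by exactly one along each
   edge and lap d(b, .) = D - K d(b, .). Evaluating at a neighbour of b gives K = 2,
   so every y has exactly d(b, y) neighbours closer to b. Then recording, for each
   neighbour e of a base vertex x0, whether y is closer to e than to x0 is an
   isomorphism onto the hypercube Q_D. *)

From Pilot Require Import Defs.
From HB Require Import structures.
From mathcomp Require Import all_boot all_order all_algebra.
From mathcomp Require Import boolp reals ereal.
From mathcomp Require Import ring lra zify.
Import Order.TTheory GRing.Theory Num.Theory.
Set Implicit Arguments. Unset Strict Implicit. Unset Printing Implicit Defensive.
Local Open Scope ring_scope.

Lemma DegE (V : finType) (adj : rel V) x : Deg adj x = #|[set y | adj x y]|.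
Proof. by apply: eq_card => y; rewrite !inE /= unfold_in /in_set /= asboolb. Qed.

Section Distance.
Variables (V : finType) (adj : rel V).
Hypothesis adj_sym : symmetric adj.

Local Notation d := (dist adj).

Lemma walk_lenP x y n :
  reflect (exists p : seq V, [/\ size p = n, path adj x p & last x p = y])
          (walk_len adj x y n).
Proof.
apply: (iffP existsP) => [[p /andP[hp /eqP hl]]|[p [hs hp hl]]].
  by exists (val p); rewrite size_tuple.
have hs' : size p == n by rewrite hs.
by exists (Tuple hs'); rewrite /= hp hl eqxx.
Qed.

Lemma walk_len0 x y : walk_len adj x y 0 = (x == y).
Proof. by apply/walk_lenP/eqP => [[p [/size0nil -> _ <-]] //|<-]; exists [::]. Qed.

Lemma walk_lenS x y z n : walk_len adj x y n -> adj y z -> walk_len adj x z n.+1.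
Proof.
move=> /walk_lenP[p [hs hp hl]] hyz; apply/walk_lenP; exists (rcons p z).
by rewrite size_rcons hs rcons_path hp hl hyz last_rcons.
Qed.

Lemma walk_len_sym x y n : walk_len adj x y n -> walk_len adj y x n.
Proof.
move=> /walk_lenP[p [hs hp hl]]; apply/walk_lenP; exists (rev (belast x p)); split.
- by rewrite size_rev size_belast.
- by rewrite -hl rev_path; apply: sub_path hp => a b; rewrite adj_sym.
- by case: p {hs hp} hl => [<-|a p <-] //=; rewrite rev_cons last_rcons.
Qed.

Hypothesis conn : connected_graph adj.

Lemma exists_short_walk x y : exists2 n, (n < #|V|)%N & walk_len adj x y n.
Proof.
have /connectP[p hp ->] := conn x y; have [q hq uq _] := shortenP hp.
exists (size q); last by apply/walk_lenP; exists q.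
by have /= <- := card_uniqP uq; exact: max_card.
Qed.

Lemma walk_len_dist x y : walk_len adj x y (d x y).
Proof.
have [n hn hw] := exists_short_walk x y.
have hh : has (walk_len adj x y) (iota 0 #|V|) by apply/hasP; exists n; rewrite ?mem_iota.
by have := nth_find 0 hh; rewrite nth_iota //; rewrite has_find size_iota in hh.
Qed.

Lemma dist_min x y n : walk_len adj x y n -> (d x y <= n)%N.
Proof.
move=> hw; rewrite leqNgt; apply/negP => hlt.
have hn : (n < #|V|)%N.
  by apply: (leq_trans hlt); rewrite -[#|V|](size_iota 0) find_size.
by have := before_find 0 hlt; rewrite nth_iota // add0n hw.
Qed.

Lemma dist_sym x y : d x y = d y x.
Proof. by apply/eqP; rewrite eqn_leq !dist_min // walk_len_sym // walk_len_dist. Qed.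

Lemma dist_eq0 x y : (d x y == 0%N) = (x == y).
Proof.
apply/eqP/eqP => [h|<-]; first by have := walk_len_dist x y; rewrite h walk_len0 => /eqP.
by apply/eqP; rewrite -leqn0 dist_min // walk_len0.
Qed.

Lemma distxx x : d x x = 0%N.
Proof. by apply/eqP; rewrite dist_eq0. Qed.

Lemma dist_adj_leS b y z : adj y z -> (d b z <= (d b y).+1)%N.
Proof. by move=> hyz; apply/dist_min/(walk_lenS _ hyz)/walk_len_dist. Qed.

End Distance.

Section Gamma.
Variables (R : realType) (V : finType) (adj : rel V).

Local Notation lap := (lap adj).
Local Notation Gam1 := (Gam adj 1).

Lemma sumr_adj_cst (c : R) x : \sum_(y | adj x y) c = c *+ Deg adj x.
Proof. by rewrite sumr_const DegE; congr (_ *+ _); apply: eq_card => y; rewrite inE. Qed.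

Lemma eq_lap (f g : V -> R) : f =1 g -> lap f =1 lap g.
Proof. by move=> fg x; apply: eq_bigr => y _; rewrite !fg. Qed.

Lemma lapZ (c : R) (f : V -> R) x : lap (fun y => c * f y) x = c * lap f x.
Proof. by rewrite /Defs.lap mulr_sumr; apply: eq_bigr => y _; rewrite mulrBr. Qed.

Lemma lapB (f g : V -> R) x : lap (fun y => f y - g y) x = lap f x - lap g x.
Proof. by rewrite /Defs.lap -sumrB; apply: eq_bigr => y _; ring. Qed.

Lemma Gam1E (f g : V -> R) x :
  Gam1 f g x = (\sum_(y | adj x y) (f y - f x) * (g y - g x)) / 2.
Proof.
rewrite /= /Defs.lap; congr (_ / 2).
by rewrite mulr_sumr mulr_suml -!sumrB; apply: eq_bigr => y _; ring.
Qed.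

Lemma Gam1C (f g : V -> R) x : Gam1 f g x = Gam1 g f x.
Proof. by rewrite !Gam1E; congr (_ / 2); apply: eq_bigr => y _; rewrite mulrC. Qed.

Lemma Gam2E (f : V -> R) x :
  Gam adj 2 f f x = lap (Gam1 f f) x / 2 - Gam1 f (lap f) x.
Proof.
have -> : Gam adj 2 f f x = (lap (Gam1 f f) x - Gam1 f (lap f) x - Gam1 (lap f) f x) / 2.
  by [].
by rewrite (Gam1C (lap f)); field.
Qed.

Lemma Gam1_ge0 (f : V -> R) x : 0 <= Gam1 f f x.
Proof. by rewrite Gam1E divr_ge0 // sumr_ge0 // => y _; rewrite -expr2 sqr_ge0. Qed.

Lemma Gam1_eq0 (f : V -> R) x : Gam1 f f x = 0 -> forall y, adj x y -> f y = f x.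
Proof.
rewrite Gam1E => /eqP; rewrite mulf_eq0 invr_eq0 pnatr_eq0 orbF => /eqP h0 y hxy.
have hge0 z : adj x z -> 0 <= (f z - f x) * (f z - f x) by rewrite -expr2 sqr_ge0.
by have /eqP := psumr_eq0P hge0 h0 hxy; rewrite -expr2 sqrf_eq0 subr_eq0 => /eqP.
Qed.

Lemma Gam1Z (c : R) (f : V -> R) x :
  Gam1 (fun y => c * f y) (fun y => c * f y) x = c ^+ 2 * Gam1 f f x.
Proof.
by rewrite !Gam1E mulrA mulr_sumr; congr (_ / 2); apply: eq_bigr => y _; ring.
Qed.

Lemma Gam2Z (c : R) (f : V -> R) x :
  Gam adj 2 (fun y => c * f y) (fun y => c * f y) x = c ^+ 2 * Gam adj 2 f f x.
Proof.
rewrite !Gam2E (eq_lap (Gam1Z c f)) lapZ !Gam1E.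
rewrite mulrBr !mulrA; congr (_ / 2 - _ / 2).
by rewrite mulr_sumr; apply: eq_bigr => y _; rewrite !lapZ; ring.
Qed.

Lemma Gam1_scaleB (c : R) (u f : V -> R) x :
  Gam1 (fun y => c * u y - f y) (fun y => c * u y - f y) x =
  c ^+ 2 * Gam1 u u x - 2 * c * Gam1 u f x + Gam1 f f x.
Proof.
rewrite !Gam1E; transitivity ((\sum_(y | adj x y) (c ^+ 2 * ((u y - u x) * (u y - u x))
  - 2 * c * ((u y - u x) * (f y - f x)) + (f y - f x) * (f y - f x))) / 2).
  by congr (_ / 2); apply: eq_bigr => y _; ring.
by rewrite big_split sumrB /= -!mulr_sumr; ring.
Qed.

Lemma Gam1_shiftN (u f g : V -> R) (m : R) x :
  (forall y, g y = m - f y) -> Gam1 u g x = - Gam1 u f x.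
Proof.
move=> hg; rewrite !Gam1E -mulNr -sumrN; congr (_ / 2).
by apply: eq_bigr => y _; rewrite !hg; ring.
Qed.

Lemma lap_le_Gam1 (c : R) (u : V -> R) x :
  2 * c * lap u x <= 2 * c ^+ 2 * Gam1 u u x + (Deg adj x)%:R.
Proof.
have : 0 <= \sum_(y | adj x y) (c * (u y - u x) - 1) ^+ 2 by apply: sumr_ge0 => y _; apply: sqr_ge0.
rewrite (eq_bigr (fun y => c ^+ 2 * ((u y - u x) * (u y - u x)) - 2 * c * (u y - u x) + 1)).
  by rewrite Gam1E big_split /= sumrB -!mulr_sumr sumr_adj_cst /Defs.lap; lra.
by move=> y _; ring.
Qed.

Section Lipschitz.
Variables (f : V -> R) (x : V).
Hypothesis f_lip : forall y, adj x y -> (f y - f x) ^+ 2 <= 1.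

Lemma Gam1_le_Deg : 2 * Gam1 f f x <= (Deg adj x)%:R.
Proof.
rewrite Gam1E mulrC divfK ?pnatr_eq0 // -sumr_adj_cst.
by apply: ler_sum => y /f_lip; rewrite expr2.
Qed.

Lemma Gam1_eq_Deg :
  2 * Gam1 f f x = (Deg adj x)%:R -> forall y, adj x y -> (f y - f x) ^+ 2 = 1.
Proof.
rewrite Gam1E mulrC divfK ?pnatr_eq0 // -sumr_adj_cst => h y hxy.
have hge0 z : adj x z -> 0 <= 1 - (f z - f x) ^+ 2 by move/f_lip; rewrite subr_ge0.
have h0 : \sum_(z | adj x z) (1 - (f z - f x) ^+ 2) = 0.
  by rewrite sumrB -h; apply/eqP; rewrite subr_eq0; apply/eqP/eq_bigr => z _; rewrite expr2.
by have /eqP := psumr_eq0P hge0 h0 hxy; rewrite subr_eq0 eq_sym => /eqP.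
Qed.

End Lipschitz.

Section Curvature.
Variable K : R.
Hypothesis K_ge0 : 0 <= K.
Hypothesis curvK : forall x : V, (K%:E <= BEcurv R adj x)%E.

Lemma curvature_ineq_pos (u : V -> R) x :
  0 < Gam1 u u x -> K * Gam1 u u x <= Gam adj 2 u u x.
Proof.
move=> hpos; pose s := Num.sqrt (Gam1 u u x).
have hs2 : s ^+ 2 = Gam1 u u x by rewrite sqr_sqrtr // ltW.
have hs0 : s != 0 by rewrite gt_eqF // sqrtr_gt0.
pose v y := s^-1 * u y.
have hv1 : Gam1 v v x = 1 by rewrite Gam1Z exprVn hs2 mulVf // gt_eqF.
have : (K%:E <= (Gam adj 2 v v x)%:E)%E.
  by apply: (le_trans (curvK x)); apply: ereal_inf_lbound; exists v.
rewrite lee_fin Gam2Z exprVn hs2 -(ler_pM2r hpos) mulrAC mulVf ?gt_eqF //.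
by rewrite mul1r.
Qed.

Lemma curvature_ineq (u : V -> R) x : K * Gam1 u u x <= Gam adj 2 u u x.
Proof.
have [|hle] := ltP 0 (Gam1 u u x); first exact: curvature_ineq_pos.
have h0 : Gam1 u u x = 0 by apply/eqP; rewrite eq_le hle Gam1_ge0.
have hc := Gam1_eq0 h0.
rewrite h0 mulr0 Gam2E Gam1E big1 ?mul0r ?subr0; last by move=> y /hc ->; rewrite subrr mul0r.
by rewrite divr_ge0 // sumr_ge0 // => y _; rewrite h0 subr0 Gam1_ge0.
Qed.

(* Since [lap u = m - f], [Gam2 u = lap (Gam1 u u) / 2 + Gam1 u f]; the curvature
   inequality is then combined with the expansion of [Gam1 (K u - f)]. *)
Lemma curvature_poisson_ineq (u f : V -> R) (m : R) x :
  (forall y, lap u y = m - f y) ->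
  K ^+ 2 * Gam1 u u x + Gam1 (fun y => K * u y - f y) (fun y => K * u y - f y) x
  <= K * lap (Gam1 u u) x + Gam1 f f x.
Proof.
move=> hu; have := curvature_ineq u x.
rewrite Gam2E (Gam1_shiftN _ _ hu) Gam1_scaleB => hc.
have := ler_wpM2l K_ge0 hc; nra.
Qed.

End Curvature.
End Gamma.

Section ConnectedLaplacian.
Variables (R : realType) (V : finType) (adj : rel V).
Hypothesis adj_sym : symmetric adj.
Hypothesis conn : connected_graph adj.

Local Notation lap := (lap adj).

Lemma adj_closed_all (P : pred V) :
  (forall x y, P x -> adj x y -> P y) -> forall x y, P x -> P y.
Proof.
move=> hP x y Px; have clP : fingraph.closed adj P.
  by move=> a b hab; apply/idP/idP => [/hP|/hP]; apply; rewrite // adj_sym.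
by have := closed_connect clP (conn x y); rewrite !unfold_in Px => <-.
Qed.

Lemma exists_maximizer (g : V -> R) (x0 : V) : exists y, forall z, g z <= g y.
Proof. by case: (@arg_maxP _ _ V x0 predT g isT) => y _ hy; exists y => z; apply: hy. Qed.

Section AtMaximum.
Variables (g : V -> R) (y : V).
Hypothesis g_max : forall z, g z <= g y.

Lemma lap_le0_max : lap g y <= 0.
Proof. by apply: sumr_le0 => z _; rewrite subr_le0. Qed.

Lemma lap_eq0_max z : lap g y = 0 -> adj y z -> g z = g y.
Proof.
move=> h0 hyz; have hge0 w : adj y w -> 0 <= g y - g w by rewrite subr_ge0.
have h0' : \sum_(w | adj y w) (g y - g w) = 0.
  rewrite (eq_bigr (fun w => - (g w - g y))) => [|w _]; last by rewrite opprB.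
  by rewrite sumrN; move: h0; rewrite /Defs.lap => ->; rewrite oppr0.
by have /eqP := psumr_eq0P hge0 h0' hyz; rewrite subr_eq0 eq_sym => /eqP.
Qed.

End AtMaximum.

Lemma max_principle (g : V -> R) y :
  (forall z, g z <= g y) -> (forall x, g x = g y -> lap g x = 0) -> forall x, g x = g y.
Proof.
move=> g_max hharm x; apply/eqP; apply: (@adj_closed_all (fun w => g w == g y) _ y) => //.
move=> a b /eqP ha hab; have a_max w : g w <= g a by rewrite ha.
by apply/eqP; rewrite -ha (lap_eq0_max a_max (hharm a ha) hab).
Qed.

Lemma harmonic_const (g : V -> R) : (forall x, lap g x = 0) -> forall x y, g x = g y.
Proof.
move=> hg x y; have [m hm] := exists_maximizer g x.
by rewrite !(max_principle hm).
Qed.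

Lemma sum_lap (g : V -> R) : \sum_x lap g x = 0.
Proof.
rewrite /Defs.lap; under eq_bigr do rewrite sumrB.
rewrite sumrB (exchange_big_dep predT) //=; apply/eqP; rewrite subr_eq0; apply/eqP.
by apply: eq_bigr => x _; apply: eq_bigl => y; rewrite adj_sym.
Qed.

(* [lap] kills the constants; subtracting the total sum makes it injective, hence
   invertible, and its image is then shown to contain every zero-sum function. *)
Definition shifted_lap (u : V -> R) x := lap u x - \sum_y u y.

Lemma eq_shifted_lap (f g : V -> R) : f =1 g -> shifted_lap f =1 shifted_lap g.
Proof. by move=> fg x; rewrite /shifted_lap (eq_lap adj fg) (eq_bigr _ (fun y _ => fg y)). Qed.

Lemma sum_shifted_lap (u : V -> R) : \sum_x shifted_lap u x = - (#|V|%:R * \sum_y u y).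
Proof. by rewrite sumrB sum_lap sub0r sumr_const mulr_natl. Qed.

Lemma shifted_lap_eq0 (u : V -> R) : (forall x, shifted_lap u x = 0) -> forall x, u x = 0.
Proof.
move=> h0 x; have hV : (#|V|%:R : R) != 0 by rewrite pnatr_eq0 -lt0n; apply/card_gt0P; exists x.
have hsum : \sum_y u y = 0.
  move: (sum_shifted_lap u); rewrite big1 // => /esym/eqP.
  by rewrite oppr_eq0 mulf_eq0 (negbTE hV) => /eqP.
have hlap y : lap u y = 0 by move: (h0 y); rewrite /shifted_lap hsum subr0.
move: hsum; rewrite (eq_bigr _ (fun y _ => harmonic_const hlap y x)) sumr_const.
by move/eqP; rewrite -mulr_natl mulf_eq0 (negbTE hV) => /eqP.
Qed.

Lemma shifted_lap_sum (I : finType) (c : I -> R) (F : I -> V -> R) x :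
  \sum_i c i * shifted_lap (F i) x = shifted_lap (fun y => \sum_i c i * F i y) x.
Proof.
rewrite /shifted_lap /Defs.lap.
transitivity (\sum_i \sum_(z | adj x z) c i * (F i z - F i x) - \sum_i \sum_y c i * F i y).
  by rewrite -sumrB; apply: eq_bigr => i _; rewrite mulrBr !mulr_sumr.
rewrite [in RHS]exchange_big /= [X in X - _]exchange_big /=; congr (_ - _).
by apply: eq_bigr => z _; rewrite -sumrB; apply: eq_bigr => i _; rewrite mulrBr.
Qed.

Definition shifted_lap_mx : 'M[R]_#|V| :=
  \matrix_(i, j) shifted_lap (fun y => (y == enum_val i)%:R) (enum_val j).

Lemma mul_shifted_lap_mx (v : 'rV[R]_#|V|) j :
  (v *m shifted_lap_mx) 0 j = shifted_lap (fun y => v 0 (enum_rank y)) (enum_val j).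
Proof.
rewrite mxE (eq_bigr _ (fun i _ => congr1 (GRing.mul _) (mxE _ _ i j))) shifted_lap_sum.
apply: eq_shifted_lap => y; rewrite (bigD1 (enum_rank y)) //= enum_rankK eqxx mulr1.
rewrite big1 ?addr0 // => i hi; case: eqP => [hy|]; last by rewrite mulr0.
by move: hi; rewrite hy enum_valK eqxx.
Qed.

Lemma shifted_lap_mx_unit : shifted_lap_mx \in unitmx.
Proof.
rewrite -row_free_unit -kermx_eq0; apply/eqP/row_matrixP => i; rewrite row0.
set r := row i _; have hr : r *m shifted_lap_mx = 0 by rewrite -row_mul mulmx_ker row0.
apply/rowP => j; rewrite [RHS]mxE -[j]enum_valK.
apply: (@shifted_lap_eq0 (fun y => r 0 (enum_rank y))) => x.
by rewrite -(enum_rankK x) -mul_shifted_lap_mx hr mxE.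
Qed.

Lemma poisson_solvable (g : V -> R) :
  \sum_x g x = 0 -> exists u, forall x, lap u x = g x.
Proof.
move=> hg; pose v := (\row_j g (enum_val j)) *m invmx shifted_lap_mx.
pose u y := v 0 (enum_rank y).
have hu x : shifted_lap u x = g x.
  by rewrite -(enum_rankK x) -mul_shifted_lap_mx mulmxKV ?shifted_lap_mx_unit // mxE.
have hsum : \sum_y u y = 0.
  have := sum_shifted_lap u; rewrite (eq_bigr _ (fun x _ => hu x)) hg => /esym/eqP.
  rewrite oppr_eq0 mulf_eq0 pnatr_eq0 => /orP[/eqP/card0_eq hV|/eqP //].
  by rewrite big_pred0.
by exists u => x; rewrite -hu /shifted_lap hsum subr0.
Qed.

End ConnectedLaplacian.

Section CurvatureDistance.
Variables (R : realType) (V : finType) (adj : rel V) (K : R).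
Hypothesis adj_sym : symmetric adj.
Hypothesis conn : connected_graph adj.
Hypothesis K_gt0 : 0 < K.
Hypothesis curvK : forall x : V, (K%:E <= BEcurv R adj x)%E.

Local Notation D := (maxDeg adj).
Local Notation lap := (lap adj).
Local Notation Gam1 := (Gam adj 1).

Definition distR (b y : V) : R := (dist adj b y)%:R.

Definition mean_dist (b : V) : R := (\sum_y distR b y) / #|V|%:R.

Lemma Deg_le_maxDeg y : (Deg adj y <= D)%N.
Proof. exact: (leq_bigmax (F := Deg adj) y). Qed.

Lemma distR_lipschitz b y z : adj y z -> (distR b z - distR b y) ^+ 2 <= 1.
Proof.
move=> hyz; have := dist_adj_leS conn b hyz; rewrite adj_sym in hyz.
have := dist_adj_leS conn b hyz; rewrite -!(ler_nat R) -!natr1 /distR => h1 h2; nra.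
Qed.

Section PoissonDistance.
Variables (b : V) (m : R) (u : V -> R).
Hypothesis lap_u : forall x, lap u x = m - distR b x.
Variable y : V.
Hypothesis Gam1_max : forall z, Gam1 u u z <= Gam1 u u y.

Let K_ge0 := ltW K_gt0.

Lemma Gam1_max_bound :
  [/\ K ^+ 2 * Gam1 u u y + Gam1 (fun z => K * u z - distR b z) (fun z => K * u z - distR b z) y
        - K * lap (Gam1 u u) y <= Gam1 (distR b) (distR b) y,
      0 <= Gam1 (fun z => K * u z - distR b z) (fun z => K * u z - distR b z) y,
      K * lap (Gam1 u u) y <= 0 &
      2 * Gam1 (distR b) (distR b) y <= (Deg adj y)%:R].
Proof.
split; last exact: Gam1_le_Deg (distR_lipschitz b (y := y)).
- by have := curvature_poisson_ineq K_ge0 curvK y lap_u; lra.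
- exact: Gam1_ge0.
- exact: mulr_ge0_le0 K_ge0 (lap_le0_max adj Gam1_max).
Qed.

Lemma Gam1_max_le : 2 * K ^+ 2 * Gam1 u u y <= D%:R.
Proof.
have [] := Gam1_max_bound; have : (Deg adj y)%:R <= D%:R :> R by rewrite ler_nat Deg_le_maxDeg.
rewrite -mulrA; lra.
Qed.

Lemma Gam1_max_eq : 2 * K ^+ 2 * Gam1 u u y = D%:R ->
  [/\ lap (Gam1 u u) y = 0, Deg adj y = D,
      forall z, adj y z -> K * (u z - u y) = distR b z - distR b y &
      forall z, adj y z -> (distR b z - distR b y) ^+ 2 = 1].
Proof.
move=> hM; have [hcurv hsq hlap hdist] := Gam1_max_bound.
have hD : (Deg adj y)%:R <= D%:R :> R by rewrite ler_nat Deg_le_maxDeg.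
rewrite -mulrA in hM.
have hDeg : (Deg adj y)%:R = D%:R :> R by lra.
have hDeg2 : 2 * Gam1 (distR b) (distR b) y = (Deg adj y)%:R by lra.
split.
- have /eqP : K * lap (Gam1 u u) y = 0 by lra.
  by rewrite mulf_eq0 gt_eqF //= => /eqP.
- by apply/eqP; rewrite -(eqr_nat R) hDeg.
- move=> z hyz; have hQ : Gam1 (fun z => K * u z - distR b z) (fun z => K * u z - distR b z) y = 0.
    by lra.
  by have := Gam1_eq0 hQ hyz; rewrite mulrBr; lra.
- exact: Gam1_eq_Deg (distR_lipschitz b (y := y)) hDeg2.
Qed.

Lemma mean_le_Gam1_max : 2 * K * m <= 2 * K ^+ 2 * Gam1 u u y + D%:R.
Proof.
have := lap_le_Gam1 adj K u b; rewrite lap_u /distR distxx // mulr0n subr0.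
have := Gam1_max b; have : (Deg adj b)%:R <= D%:R :> R by rewrite ler_nat Deg_le_maxDeg.
have : 0 <= K ^+ 2 by rewrite sqr_ge0.
nra.
Qed.

End PoissonDistance.

Lemma mean_dist_poisson b : exists u, forall x, lap u x = mean_dist b - distR b x.
Proof.
apply: poisson_solvable => //; rewrite sumrB sumr_const -mulr_natr /mean_dist.
by rewrite divfK ?subrr // pnatr_eq0 -lt0n; apply/card_gt0P; exists b.
Qed.

Lemma mean_dist_le b : K * mean_dist b <= D%:R.
Proof.
have [u lap_u] := mean_dist_poisson b; have [y Gam1_max] := exists_maximizer (Gam1 u u) b.
have := mean_le_Gam1_max lap_u Gam1_max; have := Gam1_max_le lap_u Gam1_max; lra.
Qed.

Lemma mean_dist_eq b : K * mean_dist b = D%:R ->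
  [/\ forall y, Deg adj y = D,
      forall y z, adj y z -> (distR b z - distR b y) ^+ 2 = 1 &
      forall y, lap (distR b) y = D%:R - K * distR b y].
Proof.
move=> hmean; have [u lap_u] := mean_dist_poisson b.
have [y0 Gam1_max] := exists_maximizer (Gam1 u u) b.
have hM : 2 * K ^+ 2 * Gam1 u u y0 = D%:R.
  have := mean_le_Gam1_max lap_u Gam1_max; have := Gam1_max_le lap_u Gam1_max; lra.
have max_at y : Gam1 u u y = Gam1 u u y0 -> forall z, Gam1 u u z <= Gam1 u u y.
  by move=> -> z; apply: Gam1_max.
have max_eq y (hy : Gam1 u u y = Gam1 u u y0) := Gam1_max_eq lap_u (max_at y hy).
have Gam1_const : forall y, Gam1 u u y = Gam1 u u y0.
  by apply: max_principle => // y hy; case: (max_eq y hy) => //; rewrite hy.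
have hMy y : 2 * K ^+ 2 * Gam1 u u y = D%:R by rewrite Gam1_const.
have {}max_eq y := max_eq y (Gam1_const y) (hMy y).
split=> [y|y z|y]; first by case: (max_eq y).
  by case: (max_eq y) => _ _ _; apply.
have [_ _ hgrad _] := max_eq y.
rewrite /Defs.lap (eq_bigr _ (fun z hz => esym (hgrad z hz))) -mulr_sumr.
by rewrite -/(lap u y) lap_u mulrBr hmean.
Qed.

Lemma diam_eff_mean : diam_eff R adj = (\sum_b mean_dist b) / #|V|%:R.
Proof. by rewrite /diam_eff /mean_dist -mulr_suml expr2 invfM mulrA. Qed.

Lemma mean_dist_eq_all : diam_eff R adj = D%:R / K -> forall b, K * mean_dist b = D%:R.
Proof.
move=> hdiam b; have hV : (#|V|%:R : R) != 0 by rewrite pnatr_eq0 -lt0n; apply/card_gt0P; exists b.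
have hge0 x : true -> 0 <= D%:R - K * mean_dist x by rewrite subr_ge0 mean_dist_le.
have hsum : \sum_x (D%:R - K * mean_dist x) = 0.
  rewrite sumrB sumr_const -mulr_sumr -(divfK hV (\sum_x mean_dist x)) -diam_eff_mean hdiam.
  by rewrite -mulr_natr; apply/eqP; rewrite subr_eq0; apply/eqP; field; rewrite gt_eqF.
by move/eqP: (@psumr_eq0P _ _ _ _ hge0 hsum b isT); rewrite subr_eq0 eq_sym => /eqP.
Qed.

End CurvatureDistance.

Lemma sqr_natrB_eq1 (R : realDomainType) (p q : nat) :
  ((p%:R - q%:R : R) ^+ 2 = 1) -> p = q.+1 \/ q = p.+1.
Proof.
move=> h; have /orP[] : (p%:R - q%:R == 1 :> R) || (p%:R - q%:R == -1 :> R).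
  by rewrite -sqrf_eq1 h.
  by rewrite subr_eq addrC natr1 eqr_nat => /eqP; left.
by rewrite -opprB eqr_oppLR opprK subr_eq addrC natr1 eqr_nat => /eqP; right.
Qed.

Section DistanceLayers.
Variables (V : finType) (adj : rel V).
Hypothesis adj_sym : symmetric adj.
Hypothesis conn : connected_graph adj.
Hypothesis dist_adj : forall b y z, adj y z ->
  dist adj b z = (dist adj b y).+1 \/ dist adj b y = (dist adj b z).+1.

Local Notation d := (dist adj).

Definition closer_nbrs (b y : V) : {set V} := [set z | adj y z & (d b z < d b y)%N].

Lemma lap_dist_closer (R : realType) b y :
  lap adj (fun z => (d b z)%:R : R) y = (Deg adj y)%:R - 2 * #|closer_nbrs b y|%:R.
Proof.
rewrite /Defs.lap (eq_bigr (fun z => 1 - 2 * ((d b z < d b y)%N : nat)%:R)); last first.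
  move=> z /(dist_adj b)[]->; first by rewrite ltnNge leqnSn /= -natr1; ring.
  by rewrite ltnSn /= -natr1; ring.
rewrite sumrB sumr_adj_cst -mulr_sumr -natr_sum; congr (_ - 2 * _%:R).
rewrite -sum1_card [RHS]big_mkcond [LHS]big_mkcond; apply: eq_bigr => z _.
by rewrite inE; case: (adj y z); case: ltnP.
Qed.

Lemma dist_adj1 x z : adj x z -> d x z = 1%N.
Proof. by move/(dist_adj x); rewrite (distxx conn) => -[]. Qed.

Lemma closer_nbrs_adj x z : adj x z -> closer_nbrs x z = [set x].
Proof.
move=> hxz; apply/setP => w; rewrite !inE (dist_adj1 hxz) ltnS leqn0 (dist_eq0 conn).
by rewrite eq_sym; case: eqP => [->|]; rewrite ?andbF ?andbT // adj_sym.
Qed.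

(* Along an edge [x -- z] the only closer neighbour of [z] is [x], which forces
   [K = 2]; in an edgeless graph both sides vanish. *)
Lemma lap_dist_eq_two (R : realType) (K : R) : 0 < K ->
  (forall b y, lap adj (fun z => (d b z)%:R : R) y = (Deg adj y)%:R - K * (d b y)%:R) ->
  forall b y, lap adj (fun z => (d b z)%:R : R) y = (Deg adj y)%:R - 2 * (d b y)%:R.
Proof.
move=> K_gt0 hlap.
have hK b y : 2 * #|closer_nbrs b y|%:R = K * (d b y)%:R :> R.
  by have := hlap b y; rewrite lap_dist_closer; lra.
move=> b y; rewrite hlap; congr (_ - _).
case: (pickP (fun p : V * V => adj p.1 p.2)) => [[x z] /= hxz|no_adj].
  by congr (_ * _); have := hK x z; rewrite closer_nbrs_adj // cards1 dist_adj1 //; lra.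
move: (hK b y); have -> : closer_nbrs b y = set0.
  by apply/setP => z; rewrite !inE (no_adj (y, z)).
rewrite cards0 mulr0n mulr0 => /esym/eqP; rewrite mulf_eq0 gt_eqF //= => /eqP ->.
by rewrite !mulr0.
Qed.

End DistanceLayers.

Lemma sumn_pos_eq1 (I : finType) (A : {set I}) (c : I -> nat) :
  (forall i, i \in A -> 0 < c i)%N -> (\sum_(i in A) c i = #|A|)%N ->
  forall i, i \in A -> c i = 1%N.
Proof.
move=> c_gt0 hsum i Pi.
have hsplit : (\sum_(j in A) c j = \sum_(j in A) (c j - 1) + #|A|)%N.
  by rewrite -sum1_card -big_split /=; apply: eq_bigr => j /c_gt0 hj; rewrite subnK.
have /eqP : (\sum_(j in A) (c j - 1) = 0)%N by move: hsplit; rewrite hsum; lia.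
rewrite sum_nat_eq0 => /forallP/(_ i); rewrite Pi /= subn_eq0 => hle.
by apply/eqP; rewrite eqn_leq hle c_gt0.
Qed.

Lemma QadjE m (u v : {ffun 'I_m -> bool}) : Qadj u v = (#|[set i | u i != v i]| == 1%N).
Proof. by congr (_ == _); apply: eq_card => i; rewrite !inE /= unfold_in /in_set /= asboolb. Qed.

Definition flip_at (n : nat) (w : {ffun 'I_n -> bool}) (i : 'I_n) : {ffun 'I_n -> bool} :=
  [ffun j => (j == i) (+) w j].

Lemma flip_atK n (i : 'I_n) : involutive (fun w : {ffun 'I_n -> bool} => flip_at w i).
Proof. by move=> w; apply/ffunP => j; rewrite !ffunE addbA addbb. Qed.

Lemma card_flip_at n (w : {ffun 'I_n -> bool}) i :
  (#|[set j | flip_at w i j]| + w i = #|[set j | w j]| + ~~ w i)%N.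
Proof.
case wi: (w i).
  have -> : [set j | flip_at w i j] = [set j | w j] :\ i.
    by apply/setP => j; rewrite !inE ffunE; case: eqP => [->|]; rewrite ?wi.
  by have := cardsD1 i [set j | w j]; rewrite inE wi /=; lia.
have -> : [set j | flip_at w i j] = i |: [set j | w j].
  by apply/setP => j; rewrite !inE ffunE; case: eqP => [->|]; rewrite ?wi.
by rewrite cardsU1 inE wi /=; lia.
Qed.

Section HypercubeEmbedding.
Variables (R : realType) (V : finType) (adj : rel V) (D : nat) (x0 : V).
Hypothesis adj_sym : symmetric adj.
Hypothesis conn : connected_graph adj.
Hypothesis dist_adj : forall b y z, adj y z ->
  dist adj b z = (dist adj b y).+1 \/ dist adj b y = (dist adj b z).+1.
Hypothesis regular : forall y, Deg adj y = D.
Hypothesis lap_dist : forall b y,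
  lap adj (fun z => (dist adj b z)%:R : R) y = (Deg adj y)%:R - 2 * (dist adj b y)%:R.

Local Notation d := (dist adj).

Let n := #|[set z | adj x0 z]|.

Definition nbr (i : 'I_n) : V := enum_val i.

(* Coordinate [i] records on which side of the edge [x0 -- nbr i] a vertex lies. *)
Definition cube_coord (y : V) : {ffun 'I_n -> bool} := [ffun i => (d (nbr i) y < d x0 y)%N].

Lemma nbr_adj i : adj x0 (nbr i).
Proof. by have := enum_valP i; rewrite inE. Qed.

Lemma card_closer_nbrs b y : #|closer_nbrs adj b y| = d b y.
Proof.
have := lap_dist b y; rewrite lap_dist_closer // => /eqP.
by rewrite -subr_eq0 opprB addrC subrKA -mulrBr mulf_eq0 pnatr_eq0 subr_eq0 eqr_nat => /eqP.
Qed.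

Lemma card_cube_coord y : #|[set i | cube_coord y i]| = d x0 y.
Proof.
rewrite -(card_imset _ (@enum_val_inj _ _)) (dist_sym adj_sym conn) -card_closer_nbrs.
apply: eq_card => z; rewrite [RHS]inE; apply/imsetP/andP => [[i]|[hz hlt]].
  by rewrite inE ffunE !(dist_sym adj_sym conn y) => hi ->; split; first exact: nbr_adj.
have zN : z \in [set z | adj x0 z] by rewrite inE.
exists (enum_rank_in zN z); last by rewrite enum_rankK_in.
by rewrite inE ffunE /nbr enum_rankK_in // -!(dist_sym adj_sym conn y).
Qed.

Lemma cube_coordE y i : (d x0 y)%:R - (d (nbr i) y)%:R = (if cube_coord y i then 1 else -1) :> R.
Proof.
rewrite ffunE !(dist_sym adj_sym conn _ y).
by case: (dist_adj y (nbr_adj i)) => ->; rewrite ?ltnSn ?ltnNge ?leqnSn -natr1; ring.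
Qed.

(* [h := d(x0, .) - d(nbr i, .)] takes the values +-1 and satisfies [lap h = -2 h],
   so exactly one neighbour of [y] lies on the other side. *)
Lemma card_flip y i : #|[set z | adj y z & cube_coord z i != cube_coord y i]| = 1%N.
Proof.
pose h w : R := (d x0 w)%:R - (d (nbr i) w)%:R.
have lap_h : lap adj h y = -2 * h y by rewrite lapB !lap_dist /h; ring.
have hy0 : -2 * h y != 0.
  by rewrite /h cube_coordE; case: ifP; rewrite ?mulr1 ?mulrN1 ?oppr_eq0.
move: lap_h; rewrite /Defs.lap.
rewrite (eq_bigr (fun z => ((cube_coord z i != cube_coord y i) : nat)%:R * (-2 * h y))).
  rewrite -mulr_suml -natr_sum -[X in _ = X]mul1r => /(mulIf hy0)/eqP.
  rewrite pnatr_eq1 => /eqP <-; rewrite -sum1dep_card big_mkcondr /=.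
  by apply: eq_bigr => z _; case: (_ != _).
move=> z _; rewrite /h !cube_coordE.
by case: (cube_coord z i); case: (cube_coord y i) => /=; ring.
Qed.

Lemma cube_coord_adj_neq y z : adj y z -> cube_coord y != cube_coord z.
Proof.
move=> hyz; apply/eqP => e; have := card_cube_coord z; rewrite -e card_cube_coord.
by case: (dist_adj x0 hyz) => ->; lia.
Qed.

(* Double counting: the neighbours of [y] flip each of the [n = deg y] coordinates
   exactly once, and each of them flips at least one. *)
Lemma card_cube_coord_adj y z :
  adj y z -> #|[set i | cube_coord y i != cube_coord z i]| = 1%N.
Proof.
have hsum : (\sum_(w in [set w | adj y w]) #|[set i | cube_coord y i != cube_coord w i]|
             = #|[set w | adj y w]|)%N.
  have -> : #|[set w | adj y w]| = n by rewrite -(DegE adj) regular -(regular x0) DegE.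
  rewrite -[in RHS](card_ord n) -[in RHS]sum1_card.
  under eq_bigr do rewrite -sum1dep_card.
  rewrite (exchange_big_dep predT) //=; apply: eq_bigr => i _.
  by rewrite sum1dep_card -(card_flip y i); apply: eq_card => w; rewrite !inE eq_sym.
move=> hyz; apply: (sumn_pos_eq1 _ hsum); last by rewrite inE.
move=> w; rewrite inE => /cube_coord_adj_neq /eqP hne; apply/card_gt0P.
apply/existsP; apply: contra_notT hne => /existsPn hall; apply/ffunP => i.
by have := hall i; rewrite inE => /negbNE/eqP.
Qed.

Lemma cube_coord_flip y z i : adj y z -> cube_coord y i != cube_coord z i ->
  cube_coord z = flip_at (cube_coord y) i.
Proof.
move=> hyz hi; have /eqP/cards1P[k hk] := card_cube_coord_adj hyz.
have ki : i = k by apply/set1P; rewrite -hk inE.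
apply/ffunP => j; rewrite [flip_at _ _ _]ffunE; move/setP/(_ j): hk; rewrite !inE -ki.
by case: (j == i); case: (cube_coord y j); case: (cube_coord z j).
Qed.

Lemma exists_flip y i : exists2 z, adj y z & cube_coord y i != cube_coord z i.
Proof.
have /card_gt0P[z] : (0 < #|[set z | adj y z & cube_coord z i != cube_coord y i]|)%N.
  by rewrite card_flip.
by rewrite inE eq_sym => /andP[]; exists z.
Qed.

Lemma flip_uniq y i z z' : adj y z -> cube_coord y i != cube_coord z i ->
  adj y z' -> cube_coord y i != cube_coord z' i -> z = z'.
Proof.
move=> hz hzi hz' hzi'; have /eqP/cards1P[w hw] := card_flip y i.
have : z \in [set w] by rewrite -hw inE hz eq_sym.
have : z' \in [set w] by rewrite -hw inE hz' eq_sym.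
by rewrite !inE => /eqP -> /eqP ->.
Qed.

Lemma cube_coord_x0 : cube_coord x0 = [ffun=> false].
Proof. by apply/ffunP => i; rewrite !ffunE (distxx conn). Qed.

Lemma cube_coord_inj : injective cube_coord.
Proof.
suff hk k y y' : d x0 y = k -> cube_coord y = cube_coord y' -> y = y' by move=> y y'; apply: hk.
elim: k y y' => [|k IH] y y' hk e.
  have hk' : d x0 y' = 0%N by rewrite -card_cube_coord -e card_cube_coord.
  by move/eqP: hk; move/eqP: hk'; rewrite !(dist_eq0 conn) => /eqP <- /eqP <-.
have /card_gt0P[i] : (0 < #|[set i | cube_coord y i]|)%N by rewrite card_cube_coord hk.
rewrite inE => hyi.
have [z hyz hzi] := exists_flip y i; have [z' hyz' hzi'] := exists_flip y' i.
have ez : cube_coord z = cube_coord z'.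
  by rewrite (cube_coord_flip hyz hzi) (cube_coord_flip hyz' hzi') e.
have hz : d x0 z = k.
  have := card_cube_coord z; rewrite (cube_coord_flip hyz hzi).
  have := card_flip_at (cube_coord y) i; rewrite hyi card_cube_coord hk.
  by case: (dist_adj x0 hyz) => /= h; lia.
have zz' := IH z z' hz ez; subst z'.
by apply: (@flip_uniq z i); rewrite 1?adj_sym 1?eq_sym.
Qed.

Lemma adj_cube_coord y z : adj y z = Qadj (cube_coord y) (cube_coord z).
Proof.
rewrite QadjE; apply/idP/idP => [hyz|/cards1P[k hk]]; first by rewrite card_cube_coord_adj.
have hzk : cube_coord z = flip_at (cube_coord y) k.
  apply/ffunP => j; rewrite [flip_at _ _ _]ffunE; move/setP/(_ j): hk; rewrite !inE.
  by case: (j == k); case: (cube_coord y j); case: (cube_coord z j).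
have [w hyw hwk] := exists_flip y k.
by rewrite -(cube_coord_inj (etrans (cube_coord_flip hyw hwk) (esym hzk))).
Qed.

Lemma cube_coord_surj w : exists y, cube_coord y = w.
Proof.
move: {2}#|_| (erefl #|[set j | w j]|) => k; elim: k w => [|k IH] w hw.
  exists x0; rewrite cube_coord_x0; apply/ffunP => j; rewrite ffunE.
  by apply/esym/negbTE; have := card0_eq hw j; rewrite inE => ->.
have /card_gt0P[i] : (0 < #|[set j | w j]|)%N by rewrite hw.
rewrite inE => wi.
have [y hy] : exists y, cube_coord y = flip_at w i.
  by apply: IH; have := card_flip_at w i; rewrite wi hw /=; lia.
have [z hyz hzi] := exists_flip y i.
by exists z; rewrite (cube_coord_flip hyz hzi) hy flip_atK.
Qed.

Lemma cube_coord_bij : bijective cube_coord.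
Proof.
pose g w := odflt x0 [pick y | cube_coord y == w].
have gK : cancel g cube_coord.
  move=> w; rewrite /g; case: pickP => [y /eqP //|none].
  by have [y hy] := cube_coord_surj w; have := none y; rewrite hy eqxx.
exact: Bijective (inj_can_sym gK cube_coord_inj) gK.
Qed.

End HypercubeEmbedding.

Theorem theoremA2 (R : realType) (V : finType) (adj : rel V) (K : R) :
  (0 < #|V|)%N ->
  simple_graph adj ->
  connected_graph adj ->
  0 < K ->
  (forall x : V, (K%:E <= BEcurv R adj x)%E) ->
  diam_eff R adj = (maxDeg adj)%:R / K ->
  is_hypercube adj.
Proof.
move=> V_gt0 [adj_sym _] conn K_gt0 curvK hdiam; have [x0 _] := card_gt0P V_gt0.
have mean_eq b := mean_dist_eq adj_sym conn K_gt0 curvK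
  (mean_dist_eq_all adj_sym conn K_gt0 curvK hdiam b).
have [regular _ _] := mean_eq x0.
have dist_adj b y z : adj y z ->
    dist adj b z = (dist adj b y).+1 \/ dist adj b y = (dist adj b z).+1.
  by have [_ hgrad _] := mean_eq b => /hgrad/sqr_natrB_eq1.
have lap_dist b y : lap adj (fun z => (dist adj b z)%:R : R) y
    = (Deg adj y)%:R - K * (dist adj b y)%:R.
  by have [_ _ ->] := mean_eq b; rewrite regular.
have lap_dist2 := lap_dist_eq_two adj_sym conn dist_adj K_gt0 lap_dist.
exists #|[set z | adj x0 z]|, (cube_coord adj x0); split.
  exact: cube_coord_bij adj_sym conn dist_adj regular lap_dist2.
exact: adj_cube_coord adj_sym conn dist_adj regular lap_dist2.
Qed.
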